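(* Let $\mathcal{C}$ be a complete and cocomplete regular category in which every regular epimorphism splits, and suppose that $\mathcal{C}$, with its (regular epi, mono) factorisation system $(\mathcal{E},\mathcal{M})$, satisfies: (i) $\mathcal{C}$ has pushouts and pullbacks; (ii) $(\mathcal{E},\mathcal{M})$ is a stable factorisation system with $\mathcal{E}$ consisting of epimorphisms; (iii) there is a subcategory $\mathcal{A}$ of $\mathcal{C}$ containing $\mathcal{E}$, stable under pushout, such that for every span $X\xleftarrow{f}S\xrightarrow{g}Y$ in $\mathcal{A}$ the induced morphism from $S$ to the pullback of the pushout cospan of $f,g$ lies in $\mathcal{E}$. Let $T$ be a monad on $\mathcal{C}$ such that $T$ and $T^2$ preserve pushouts of regular epimorphisms. Then the category $\mathcal{C}^T$ of $T$-algebras is a complete and cocomplete regular category which, with its (regular epi, mono) factorisation system, also satisfies (i), (ii) and (iii).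
   Context: A factorisation system $(\mathcal{E},\mathcal{M})$: subcategories containing all isomorphisms such that every morphism factors as $e;m$ ($e\in\mathcal{E}$ then $m\in\mathcal{M}$) with unique diagonal fill-ins. Stable: $\mathcal{E}$ stable under pullback (in a pullback square, if a morphism into the corner is in $\mathcal{E}$, so is the opposite side). $\mathcal{A}$ stable under pushout: in a pushout square, if a morphism out of the apex is in $\mathcal{A}$, so is the opposite side. ''$T$ preserves pushouts of regular epis'' means $T$ sends pushout squares of spans of regular epimorphisms to pushout squares. *)

From Stdlib Require Import List ProofIrrelevance.

Set Universe Polymorphism.
Unset Implicit Arguments.

(** * Categories (morphism equality is Leibniz equality);
    composition is written in diagrammatic order: [f ;; g] = "first f, then g". *)
Cumulative Record Category := {
  ob :> Type;
  hom : ob -> ob -> Type;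
  idm : forall X, hom X X;
  cmp : forall {X Y Z}, hom X Y -> hom Y Z -> hom X Z;
  cmp_idl : forall X Y (f : hom X Y), cmp (idm X) f = f;
  cmp_idr : forall X Y (f : hom X Y), cmp f (idm Y) = f;
  cmp_assoc : forall X Y Z W (f : hom X Y) (g : hom Y Z) (h : hom Z W),
      cmp (cmp f g) h = cmp f (cmp g h)
}.
Arguments idm {C} X : rename.
Arguments cmp {C} {X Y Z} f g : rename.
Arguments hom {C} X Y : rename.
Notation "f ;; g" := (cmp f g) (at level 40, left associativity).

Record Functor (C D : Category) := {
  fob :> ob C -> ob D;
  fmap : forall {X Y : C}, hom X Y -> hom (fob X) (fob Y);
  fmap_id : forall X : C, fmap (idm X) = idm (fob X);
  fmap_cmp : forall (X Y Z : C) (f : hom X Y) (g : hom Y Z),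
      fmap (f ;; g) = fmap f ;; fmap g
}.
Arguments fmap {C D} F {X Y} f : rename.

Definition Functor_comp_def (C D E : Category) (F : Functor C D) (G : Functor D E) :
  Functor C E.
Proof.
  refine {| fob := fun X => G (F X);
            fmap := fun X Y f => fmap G (fmap F f) |}.
  - intros X. rewrite !fmap_id. reflexivity.
  - intros X Y Z f g. rewrite !fmap_cmp. reflexivity.
Defined.

Definition morclass (C : Category) := forall X Y : C, hom X Y -> Prop.

Section Notions.
Context {C : Category}.

Definition is_mono {X Y : C} (m : hom X Y) : Prop :=
  forall W (x y : hom W X), x ;; m = y ;; m -> x = y.
Definition is_epi {X Y : C} (e : hom X Y) : Prop :=
  forall W (x y : hom Y W), e ;; x = e ;; y -> x = y.
Definition is_iso {X Y : C} (f : hom X Y) : Prop :=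
  exists g : hom Y X, f ;; g = idm X /\ g ;; f = idm Y.

Definition is_coequalizer {X Y Q : C} (f g : hom X Y) (q : hom Y Q) : Prop :=
  f ;; q = g ;; q /\
  forall W (h : hom Y W), f ;; h = g ;; h -> exists! u : hom Q W, q ;; u = h.

Definition is_regular_epi {Y Q : C} (q : hom Y Q) : Prop :=
  exists (X : C) (f g : hom X Y), is_coequalizer f g q.

Definition is_split_epi {X Y : C} (e : hom X Y) : Prop :=
  exists s : hom Y X, s ;; e = idm Y.

Definition is_pullback {X Y Z P : C} (f : hom X Z) (g : hom Y Z)
  (p1 : hom P X) (p2 : hom P Y) : Prop :=
  p1 ;; f = p2 ;; g /\
  forall Q (q1 : hom Q X) (q2 : hom Q Y), q1 ;; f = q2 ;; g ->
    exists! u : hom Q P, u ;; p1 = q1 /\ u ;; p2 = q2.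

Definition is_pushout {S X Y Q : C} (f : hom S X) (g : hom S Y)
  (i1 : hom X Q) (i2 : hom Y Q) : Prop :=
  f ;; i1 = g ;; i2 /\
  forall W (w1 : hom X W) (w2 : hom Y W), f ;; w1 = g ;; w2 ->
    exists! u : hom Q W, i1 ;; u = w1 /\ i2 ;; u = w2.

Definition has_pullbacks : Prop :=
  forall (X Y Z : C) (f : hom X Z) (g : hom Y Z),
    exists (P : C) (p1 : hom P X) (p2 : hom P Y), is_pullback f g p1 p2.

Definition has_pushouts : Prop :=
  forall (S X Y : C) (f : hom S X) (g : hom S Y),
    exists (Q : C) (i1 : hom X Q) (i2 : hom Y Q), is_pushout f g i1 i2.

Definition is_limit {J : Category} (F : Functor J C) (L : C)
  (pi : forall j : J, hom L (F j)) : Prop :=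
  (forall (j k : J) (a : hom j k), pi j ;; fmap F a = pi k) /\
  forall (L' : C) (pi' : forall j : J, hom L' (F j)),
    (forall (j k : J) (a : hom j k), pi' j ;; fmap F a = pi' k) ->
    exists! u : hom L' L, forall j, u ;; pi j = pi' j.

Definition is_colimit {J : Category} (F : Functor J C) (L : C)
  (iota : forall j : J, hom (F j) L) : Prop :=
  (forall (j k : J) (a : hom j k), fmap F a ;; iota k = iota j) /\
  forall (L' : C) (iota' : forall j : J, hom (F j) L'),
    (forall (j k : J) (a : hom j k), fmap F a ;; iota' k = iota' j) ->
    exists! u : hom L L', forall j, iota j ;; u = iota' j.

Definition has_limit {J : Category} (F : Functor J C) : Prop :=
  exists (L : C) (pi : forall j : J, hom L (F j)), is_limit F L pi.
Definition has_colimit {J : Category} (F : Functor J C) : Prop :=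
  exists (L : C) (iota : forall j : J, hom (F j) L), is_colimit F L iota.

End Notions.

(** Small categories: objects and hom-sets in [Set]. *)
Definition SmallCategory := Category@{Set Set}.

Definition is_complete (C : Category) : Prop :=
  forall (J : SmallCategory) (F : Functor J C), has_limit F.
Definition is_cocomplete (C : Category) : Prop :=
  forall (J : SmallCategory) (F : Functor J C), has_colimit F.

Definition is_finite_cat (J : SmallCategory) : Prop :=
  (exists l : list (ob J), forall x, In x l) /\
  (forall x y : J, exists l : list (hom x y), forall f, In f l).

Definition finitely_complete (C : Category) : Prop :=
  forall (J : SmallCategory) (F : Functor J C), is_finite_cat J -> has_limit F.

Definition is_regular_category (C : Category) : Prop :=
  finitely_complete C /\
  (forall (X Y P : C) (f : hom X Y) (p1 p2 : hom P X),
      is_pullback f f p1 p2 -> exists (Q : C) (q : hom X Q), is_coequalizer p1 p2 q) /\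
  (forall (X Y Z P : C) (f : hom X Z) (g : hom Y Z) (p1 : hom P X) (p2 : hom P Y),
      is_pullback f g p1 p2 -> is_regular_epi g -> is_regular_epi p1).

Definition RegEpi (C : Category) : morclass C := fun X Y f => is_regular_epi f.
Definition Mono (C : Category) : morclass C := fun X Y f => is_mono f.

Definition is_factorisation_system {C : Category} (E M : morclass C) : Prop :=
  (forall (X Y : C) (f : hom X Y), is_iso f -> E X Y f) /\
  (forall (X Y : C) (f : hom X Y), is_iso f -> M X Y f) /\
  (forall (X Y Z : C) (f : hom X Y) (g : hom Y Z), E _ _ f -> E _ _ g -> E _ _ (f ;; g)) /\
  (forall (X Y Z : C) (f : hom X Y) (g : hom Y Z), M _ _ f -> M _ _ g -> M _ _ (f ;; g)) /\
  (forall (X Y : C) (f : hom X Y),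
      exists (Z : C) (e : hom X Z) (m : hom Z Y), E _ _ e /\ M _ _ m /\ f = e ;; m) /\
  (forall (A B X Y : C) (e : hom A B) (m : hom X Y) (u : hom A X) (v : hom B Y),
      E _ _ e -> M _ _ m -> e ;; v = u ;; m ->
      exists! d : hom B X, e ;; d = u /\ d ;; m = v).

Definition pullback_stable {C : Category} (E : morclass C) : Prop :=
  forall (X Y Z P : C) (f : hom X Z) (g : hom Y Z) (p1 : hom P X) (p2 : hom P Y),
    is_pullback f g p1 p2 -> E _ _ g -> E _ _ p1.

Definition pushout_stable {C : Category} (A : morclass C) : Prop :=
  forall (S X Y Q : C) (f : hom S X) (g : hom S Y) (i1 : hom X Q) (i2 : hom Y Q),
    is_pushout f g i1 i2 -> A _ _ f -> A _ _ i2.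

Definition is_subcategory {C : Category} (A : morclass C) : Prop :=
  (forall X : C, A X X (idm X)) /\
  (forall (X Y Z : C) (f : hom X Y) (g : hom Y Z), A _ _ f -> A _ _ g -> A _ _ (f ;; g)).

Definition cond_i (C : Category) : Prop := has_pushouts (C := C) /\ has_pullbacks (C := C).

Definition cond_ii {C : Category} (E M : morclass C) : Prop :=
  is_factorisation_system E M /\ pullback_stable E /\
  (forall (X Y : C) (e : hom X Y), E _ _ e -> is_epi e).

Definition cond_iii {C : Category} (E : morclass C) : Prop :=
  exists A : morclass C,
    is_subcategory A /\
    (forall (X Y : C) (e : hom X Y), E _ _ e -> A _ _ e) /\
    pushout_stable A /\
    (forall (S X Y Q P : C) (f : hom S X) (g : hom S Y)
            (i1 : hom X Q) (i2 : hom Y Q) (p1 : hom P X) (p2 : hom P Y) (u : hom S P),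
        A _ _ f -> A _ _ g ->
        is_pushout f g i1 i2 -> is_pullback i1 i2 p1 p2 ->
        u ;; p1 = f -> u ;; p2 = g -> E _ _ u).

Record Monad (C : Category) := {
  mT :> Functor C C;
  eta : forall X : C, hom X (mT X);
  mu : forall X : C, hom (mT (mT X)) (mT X);
  eta_nat : forall (X Y : C) (f : hom X Y), f ;; eta Y = eta X ;; fmap mT f;
  mu_nat : forall (X Y : C) (f : hom X Y),
      fmap mT (fmap mT f) ;; mu Y = mu X ;; fmap mT f;
  mu_assoc : forall X : C, fmap mT (mu X) ;; mu X = mu (mT X) ;; mu X;
  mu_eta_l : forall X : C, eta (mT X) ;; mu X = idm (mT X);
  mu_eta_r : forall X : C, fmap mT (eta X) ;; mu X = idm (mT X)
}.
Arguments mT {C} T : rename.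
Arguments eta {C} T X : rename.
Arguments mu {C} T X : rename.

Record Algebra {C : Category} (T : Monad C) := {
  alg_carrier :> ob C;
  alg_str : hom (T alg_carrier) alg_carrier;
  alg_unit : eta T alg_carrier ;; alg_str = idm alg_carrier;
  alg_mult : fmap T alg_str ;; alg_str = mu T alg_carrier ;; alg_str
}.
Arguments alg_carrier {C T} A : rename.
Arguments alg_str {C T} A : rename.

Definition AlgHom {C : Category} {T : Monad C} (A B : Algebra T) :=
  { h : hom (alg_carrier A) (alg_carrier B) | alg_str A ;; h = fmap T h ;; alg_str B }.

Lemma AlgHom_eq {C : Category} {T : Monad C} (A B : Algebra T) (h k : AlgHom A B) :
  proj1_sig h = proj1_sig k -> h = k.
Proof.
  destruct h as [h ph], k as [k pk]; simpl; intros ->.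
  f_equal; apply proof_irrelevance.
Qed.

Definition AlgHom_id {C : Category} {T : Monad C} (A : Algebra T) : AlgHom A A.
Proof.
  exists (idm (alg_carrier A)).
  rewrite fmap_id, cmp_idr, cmp_idl. reflexivity.
Defined.

Definition AlgHom_comp {C : Category} {T : Monad C} (A B D : Algebra T)
  (h : AlgHom A B) (k : AlgHom B D) : AlgHom A D.
Proof.
  exists (proj1_sig h ;; proj1_sig k).
  destruct h as [h ph], k as [k pk]; simpl.
  rewrite <- cmp_assoc, ph, cmp_assoc, pk, <- cmp_assoc, fmap_cmp. reflexivity.
Defined.

Definition EM {C : Category} (T : Monad C) : Category.
Proof.
  refine {| ob := Algebra T; hom := @AlgHom C T;
            idm := @AlgHom_id C T; cmp := @AlgHom_comp C T |}.
  - intros X Y f. apply AlgHom_eq; simpl. apply cmp_idl.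
  - intros X Y f. apply AlgHom_eq; simpl. apply cmp_idr.
  - intros X Y Z W f g h. apply AlgHom_eq; simpl. apply cmp_assoc.
Defined.

Definition preserves_pushouts_of_regular_epis {C D : Category} (F : Functor C D) : Prop :=
  forall (S X Y Q : C) (f : hom S X) (g : hom S Y) (i1 : hom X Q) (i2 : hom Y Q),
    is_regular_epi f -> is_regular_epi g -> is_pushout f g i1 i2 ->
    is_pushout (fmap F f) (fmap F g) (fmap F i1) (fmap F i2).

Definition monad_sq {C : Category} (T : Monad C) : Functor C C :=
  Functor_comp_def C C C (mT T) (mT T).

(** The forgetful functor [U : EM T -> C] creates limits, so [EM T] is complete and [U]
    preserves pullbacks.  Since regular epimorphisms of [C] split, [U] preserves and reflects
    regular epimorphisms and monomorphisms, and the (regular epi, mono) factorisation system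
    lifts to algebras: the structure map of an image is a diagonal fill-in.  Because [T] and
    [T ∘ T] preserve pushouts of regular epimorphisms, pushouts of spans of regular
    epimorphisms lift from [C] to [EM T]; in particular [EM T] has reflexive coequalisers, and
    the colimit of a diagram of algebras is a reflexive coequaliser of free algebras.
    Conditions (i)-(iii) then transfer along [U], taking for the class in (iii) the regular
    epimorphisms of [EM T]. *)

Set Universe Polymorphism.

Arguments cmp_assoc {c X Y Z W} f g h.
Arguments cmp_idl {c X Y} f.
Arguments cmp_idr {c X Y} f.
Arguments fmap_cmp {C D} f0 {X Y Z} f g.
Arguments fmap_id {C D} f0 X.
Arguments eta_nat {C} m {X Y} f.
Arguments mu_nat {C} m {X Y} f.
Arguments mu_assoc {C} m X.
Arguments mu_eta_l {C} m X.
Arguments mu_eta_r {C} m X.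
Arguments alg_unit {C T} a.
Arguments alg_mult {C T} a.

Section CategoryFacts.
Context {C : Category}.

Lemma split_epi_epi {X Y : C} (e : hom X Y) : is_split_epi e -> is_epi e.
Proof.
  intros [s Hs] W x y Hxy.
  rewrite <- (cmp_idl x), <- (cmp_idl y), <- Hs, !cmp_assoc, Hxy. reflexivity.
Qed.

(** [e] coequalises [idm X] and [e ;; s]. *)
Lemma split_epi_regular_epi {X Y : C} (e : hom X Y) : is_split_epi e -> is_regular_epi e.
Proof.
  intros [s Hs]. exists X, (idm X), (e ;; s). split.
  - rewrite cmp_idl, cmp_assoc, Hs, cmp_idr. reflexivity.
  - intros W h Hh. rewrite cmp_idl in Hh. exists (s ;; h). split.
    + rewrite <- cmp_assoc. symmetry. exact Hh.
    + intros u Hu. rewrite <- Hu, <- cmp_assoc, Hs, cmp_idl. reflexivity.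
Qed.

Lemma coequalizer_epi {X Y Q : C} (f g : hom X Y) (q : hom Y Q) :
  is_coequalizer f g q -> is_epi q.
Proof.
  intros [Hq Huniv] W x y Hxy.
  destruct (Huniv W (q ;; x)) as [u [_ Hu]].
  - rewrite <- !cmp_assoc, Hq. reflexivity.
  - transitivity u; [symmetry|]; apply Hu; [reflexivity | symmetry; exact Hxy].
Qed.

Lemma regular_epi_epi {X Y : C} (e : hom X Y) : is_regular_epi e -> is_epi e.
Proof. intros (Z & f & g & H). exact (coequalizer_epi f g e H). Qed.

Lemma iso_mono {X Y : C} (m : hom X Y) : is_iso m -> is_mono m.
Proof.
  intros [n [Hmn _]] W x y E.
  rewrite <- (cmp_idr x), <- (cmp_idr y), <- Hmn, <- !cmp_assoc, E. reflexivity.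
Qed.

Lemma mono_cmp {X Y Z : C} (f : hom X Y) (g : hom Y Z) :
  is_mono f -> is_mono g -> is_mono (f ;; g).
Proof. intros Hf Hg W x y E. apply Hf, Hg. rewrite !cmp_assoc. exact E. Qed.

Lemma pushout_jointly_epi {S X Y Q W : C} (f : hom S X) (g : hom S Y)
  (i1 : hom X Q) (i2 : hom Y Q) (x y : hom Q W) :
  is_pushout f g i1 i2 -> i1 ;; x = i1 ;; y -> i2 ;; x = i2 ;; y -> x = y.
Proof.
  intros [Hsq Huniv] E1 E2.
  destruct (Huniv W (i1 ;; x) (i2 ;; x)) as [u [_ Hu]].
  - rewrite <- !cmp_assoc, Hsq. reflexivity.
  - transitivity u; [symmetry|]; apply Hu; split; auto.
Qed.

Lemma limit_jointly_mono {J : Category} (F : Functor J C) (L : C)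
  (pi : forall j, hom L (F j)) {W : C} (x y : hom W L) :
  is_limit F L pi -> (forall j, x ;; pi j = y ;; pi j) -> x = y.
Proof.
  intros [Hcone Huniv] E.
  destruct (Huniv W (fun j => x ;; pi j)) as [u [_ Hu]].
  { intros j k a. rewrite cmp_assoc, Hcone. reflexivity. }
  transitivity u; [symmetry|]; apply Hu; intros j; [reflexivity | symmetry; apply E].
Qed.

Lemma colimit_jointly_epi {J : Category} (F : Functor J C) (L : C)
  (iota : forall j, hom (F j) L) {W : C} (x y : hom L W) :
  is_colimit F L iota -> (forall j, iota j ;; x = iota j ;; y) -> x = y.
Proof.
  intros [Hcocone Huniv] E.
  destruct (Huniv W (fun j => iota j ;; x)) as [u [_ Hu]].
  { intros j k a. rewrite <- cmp_assoc, Hcocone. reflexivity. }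
  transitivity u; [symmetry|]; apply Hu; intros j; [reflexivity | symmetry; apply E].
Qed.

Lemma pushout_diag_coequalizer {S X Q : C} (f g : hom S X) (i : hom X Q) :
  is_pushout f g i i -> is_coequalizer f g i.
Proof.
  intros [Hsq Huniv]. split; [exact Hsq|].
  intros W h Hh. destruct (Huniv W h h Hh) as [u [[Hu _] Hu']].
  exists u. split; [exact Hu|]. intros v Hv. apply Hu'. split; exact Hv.
Qed.

Lemma coequalizer_cmp_iso {X Y Q R : C} (a b : hom X Y) (e : hom Y Q) (m : hom Q R) :
  is_coequalizer a b e -> is_iso m -> is_coequalizer a b (e ;; m).
Proof.
  intros [Hsq Huniv] [n [Hmn Hnm]]. split.
  - rewrite <- !cmp_assoc, Hsq. reflexivity.
  - intros W h Hh. destruct (Huniv W h Hh) as [u [Hu Hu']].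
    exists (n ;; u). split.
    + rewrite cmp_assoc, <- (cmp_assoc m n u), Hmn, cmp_idl. exact Hu.
    + intros v Hv.
      assert (E : m ;; v = u) by (symmetry; apply Hu'; rewrite <- cmp_assoc; exact Hv).
      rewrite <- E, <- cmp_assoc, Hnm, cmp_idl. reflexivity.
Qed.

Lemma regular_epi_cmp_iso {X Y R : C} (e : hom X Y) (m : hom Y R) :
  is_regular_epi e -> is_iso m -> is_regular_epi (e ;; m).
Proof. intros (Z & a & b & H) Hm. exists Z, a, b. apply coequalizer_cmp_iso; assumption. Qed.

Lemma pushout_cmp_iso {S X Y Q R : C} (f : hom S X) (g : hom S Y)
  (i1 : hom X Q) (i2 : hom Y Q) (m : hom Q R) :
  is_pushout f g i1 i2 -> is_iso m -> is_pushout f g (i1 ;; m) (i2 ;; m).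
Proof.
  intros [Hsq Huniv] [n [Hmn Hnm]]. split.
  - rewrite <- !cmp_assoc, Hsq. reflexivity.
  - intros W w1 w2 Hw. destruct (Huniv W w1 w2 Hw) as [u [[Hu1 Hu2] Hu']].
    exists (n ;; u). split.
    + rewrite !cmp_assoc, <- (cmp_assoc m n u), Hmn, cmp_idl. split; assumption.
    + intros v [Hv1 Hv2].
      assert (E : m ;; v = u) by (symmetry; apply Hu'; rewrite <- !cmp_assoc; split; assumption).
      rewrite <- E, <- cmp_assoc, Hnm, cmp_idl. reflexivity.
Qed.

Lemma pushout_unique {S X Y Q Q' : C} (f : hom S X) (g : hom S Y)
  (i1 : hom X Q) (i2 : hom Y Q) (j1 : hom X Q') (j2 : hom Y Q') :
  is_pushout f g i1 i2 -> is_pushout f g j1 j2 ->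
  exists m : hom Q Q', is_iso m /\ i1 ;; m = j1 /\ i2 ;; m = j2.
Proof.
  intros HI HJ. pose proof HI as [I1 I2]. pose proof HJ as [J1 J2].
  destruct (I2 Q' j1 j2 J1) as [m [[Hm1 Hm2] _]].
  destruct (J2 Q i1 i2 I1) as [n [[Hn1 Hn2] _]].
  exists m. split; [|split; assumption].
  exists n. split.
  - apply (pushout_jointly_epi f g i1 i2); [exact HI| |];
      rewrite cmp_idr, <- cmp_assoc; [rewrite Hm1 | rewrite Hm2]; assumption.
  - apply (pushout_jointly_epi f g j1 j2); [exact HJ| |];
      rewrite cmp_idr, <- cmp_assoc; [rewrite Hn1 | rewrite Hn2]; assumption.
Qed.

Lemma pushout_coequalizer {S X Y Q Z : C} (f : hom S X) (g : hom S Y)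
  (i1 : hom X Q) (i2 : hom Y Q) (a b : hom Z S) :
  is_pushout f g i1 i2 -> is_coequalizer a b f -> is_coequalizer (a ;; g) (b ;; g) i2.
Proof.
  intros [Psq Puniv] [Csq Cuniv]. split.
  - rewrite !cmp_assoc, <- Psq, <- !cmp_assoc, Csq. reflexivity.
  - intros W h Hh.
    destruct (Cuniv W (g ;; h)) as [k [Hk Hk']]. { rewrite <- !cmp_assoc. exact Hh. }
    destruct (Puniv W k h Hk) as [u [[_ Hu2] Hu']].
    exists u. split; [exact Hu2|].
    intros v Hv. apply Hu'. split; [|exact Hv].
    symmetry. apply Hk'. rewrite <- cmp_assoc, Psq, cmp_assoc, Hv. reflexivity.
Qed.

Lemma regular_epi_pushout_stable : pushout_stable (RegEpi C).
Proof.
  intros S X Y Q f g i1 i2 HP (Z & a & b & Hf).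
  exists Z, (a ;; g), (b ;; g). exact (pushout_coequalizer f g i1 i2 a b HP Hf).
Qed.

End CategoryFacts.

Lemma fmap_split_epi {C D : Category} (F : Functor C D) {X Y : C} (e : hom X Y) :
  is_split_epi e -> is_split_epi (fmap F e).
Proof. intros [s Hs]. exists (fmap F s). rewrite <- fmap_cmp, Hs, fmap_id. reflexivity. Qed.

(** Spans and cospans are diagrams on the three-object categories [Wedge true] (arrows out of
    the apex) and [Wedge false] (arrows into the apex). *)
Inductive wedge_ob : Set := apex | end1 | end2.

Definition wedge_le (out : bool) (a b : wedge_ob) : bool :=
  match a, b with
  | apex, apex | end1, end1 | end2, end2 => true
  | apex, _ => out
  | _, apex => negb out
  | _, _ => false
  end.

Definition wedge_hom (out : bool) (a b : wedge_ob) : Set :=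
  if wedge_le out a b then unit else Empty_set.

Definition wedge_id (out : bool) (a : wedge_ob) : wedge_hom out a a.
Proof. destruct a; exact tt. Defined.

Definition wedge_cmp (out : bool) (a b c : wedge_ob) :
  wedge_hom out a b -> wedge_hom out b c -> wedge_hom out a c.
Proof.
  unfold wedge_hom; intros f g; destruct out, a, b, c; simpl in *;
    first [exact tt | exact (match f with end) | exact (match g with end)].
Defined.

Lemma wedge_hom_unique (out : bool) (a b : wedge_ob) (f g : wedge_hom out a b) : f = g.
Proof. unfold wedge_hom in *; destruct (wedge_le out a b); destruct f, g; reflexivity. Qed.

Definition Wedge (out : bool) : SmallCategory.
Proof.
  refine {| ob := wedge_ob; hom := wedge_hom out; idm := wedge_id out; cmp := wedge_cmp out |};
    intros; apply wedge_hom_unique.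
Defined.

Section WedgeDiagrams.
Context {D : Category}.

Definition wedge_diagram_ob (A X Y : D) (j : wedge_ob) : D :=
  match j with apex => A | end1 => X | end2 => Y end.

Definition span_map {S X Y : D} (f : hom S X) (g : hom S Y) (a b : wedge_ob) :
  wedge_hom true a b -> hom (wedge_diagram_ob S X Y a) (wedge_diagram_ob S X Y b).
Proof.
  unfold wedge_hom; destruct a, b; simpl; intros h;
    first [exact (idm _) | exact f | exact g | exact (match h with end)].
Defined.

Definition SpanF {S X Y : D} (f : hom S X) (g : hom S Y) : Functor (Wedge true) D.
Proof.
  refine (@Build_Functor (Wedge true) D (wedge_diagram_ob S X Y) (span_map f g) _ _).
  - intros a; destruct a; reflexivity.
  - intros a b c h k; destruct a, b, c; simpl in *; destruct h, k; simpl;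
      rewrite ?cmp_idl, ?cmp_idr; reflexivity.
Defined.

Definition cospan_map {X Y Z : D} (f : hom X Z) (g : hom Y Z) (a b : wedge_ob) :
  wedge_hom false a b -> hom (wedge_diagram_ob Z X Y a) (wedge_diagram_ob Z X Y b).
Proof.
  unfold wedge_hom; destruct a, b; simpl; intros h;
    first [exact (idm _) | exact f | exact g | exact (match h with end)].
Defined.

Definition CospanF {X Y Z : D} (f : hom X Z) (g : hom Y Z) : Functor (Wedge false) D.
Proof.
  refine (@Build_Functor (Wedge false) D (wedge_diagram_ob Z X Y) (cospan_map f g) _ _).
  - intros a; destruct a; reflexivity.
  - intros a b c h k; destruct a, b, c; simpl in *; destruct h, k; simpl;
      rewrite ?cmp_idl, ?cmp_idr; reflexivity.
Defined.

Lemma pushout_of_colimit {S X Y : D} (f : hom S X) (g : hom S Y) :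
  has_colimit (SpanF f g) ->
  exists (Q : D) (i1 : hom X Q) (i2 : hom Y Q), is_pushout f g i1 i2.
Proof.
  intros (L & iota & [Hcocone Huniv]).
  exists L, (iota end1), (iota end2).
  assert (E1 : f ;; iota end1 = iota apex) by exact (Hcocone apex end1 tt).
  assert (E2 : g ;; iota end2 = iota apex) by exact (Hcocone apex end2 tt).
  split; [rewrite E1, E2; reflexivity|].
  intros W w1 w2 Hw.
  destruct (Huniv W (fun j => match j return hom (wedge_diagram_ob S X Y j) W with
                              | apex => f ;; w1 | end1 => w1 | end2 => w2 end))
    as [u [Hu Hu']].
  { intros j k a; destruct j, k; simpl in *; destruct a; simpl;
      rewrite ?cmp_idl; try reflexivity; symmetry; exact Hw. }
  exists u. split; [split; [exact (Hu end1) | exact (Hu end2)]|].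
  intros v [Hv1 Hv2]. apply Hu'. intros j; destruct j; simpl.
  - rewrite <- E1, cmp_assoc, Hv1. reflexivity.
  - exact Hv1.
  - exact Hv2.
Qed.

Lemma pullback_of_limit {X Y Z : D} (f : hom X Z) (g : hom Y Z) :
  has_limit (CospanF f g) ->
  exists (P : D) (p1 : hom P X) (p2 : hom P Y), is_pullback f g p1 p2.
Proof.
  intros (L & pi & [Hcone Huniv]).
  exists L, (pi end1), (pi end2).
  assert (E1 : pi end1 ;; f = pi apex) by exact (Hcone end1 apex tt).
  assert (E2 : pi end2 ;; g = pi apex) by exact (Hcone end2 apex tt).
  split; [exact (eq_trans E1 (eq_sym E2))|].
  intros W w1 w2 Hw.
  destruct (Huniv W (fun j => match j return hom W (wedge_diagram_ob Z X Y j) with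
                              | apex => w1 ;; f | end1 => w1 | end2 => w2 end))
    as [u [Hu Hu']].
  { intros j k a; destruct j, k; simpl in *; destruct a; simpl;
      rewrite ?cmp_idr; try reflexivity; symmetry; exact Hw. }
  exists u. split; [split; [exact (Hu end1) | exact (Hu end2)]|].
  intros v [Hv1 Hv2]. apply Hu'. intros j; destruct j; simpl.
  - transitivity (v ;; (pi end1 ;; f)); [f_equal; symmetry; exact E1|].
    rewrite <- cmp_assoc. exact (f_equal (fun x => x ;; f) Hv1).
  - exact Hv1.
  - exact Hv2.
Qed.

Lemma cond_i_of_complete_cocomplete : is_complete D -> is_cocomplete D -> cond_i D.
Proof.
  intros Hcomp Hcocomp. split.
  - intros S X Y f g. apply pushout_of_colimit, Hcocomp.
  - intros X Y Z f g. apply pullback_of_limit, Hcomp.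
Qed.

End WedgeDiagrams.

Section EilenbergMoore.
Context {C : Category} (T : Monad C).

Local Notation "A ~> B" := (@hom (EM T) A B) (at level 90).

Definition U {A B : EM T} (h : A ~> B) : hom (alg_carrier A) (alg_carrier B) := proj1_sig h.

Lemma U_cmp {A B D : EM T} (h : A ~> B) (k : B ~> D) : U (h ;; k) = U h ;; U k.
Proof. reflexivity. Qed.

Lemma U_id (A : EM T) : U (idm A) = idm (alg_carrier A).
Proof. reflexivity. Qed.

Lemma U_alg {A B : EM T} (h : A ~> B) : alg_str A ;; U h = fmap T (U h) ;; alg_str B.
Proof. exact (proj2_sig h). Qed.

Lemma U_inj {A B : EM T} (h k : A ~> B) : U h = U k -> h = k.
Proof. apply AlgHom_eq. Qed.

Definition alg_hom {A B : EM T} (h : hom (alg_carrier A) (alg_carrier B))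
  (Hh : alg_str A ;; h = fmap T h ;; alg_str B) : A ~> B := exist _ h Hh.

Definition Forget : Functor (EM T) C :=
  {| fob := fun A : EM T => alg_carrier A; fmap := fun (A B : EM T) h => U h;
     fmap_id := fun A => eq_refl; fmap_cmp := fun A B D h k => eq_refl |}.

Definition Free (X : C) : EM T :=
  {| alg_carrier := T X; alg_str := mu T X;
     alg_unit := mu_eta_l T X; alg_mult := mu_assoc T X |}.

Lemma free_ext_alg (X : C) (A : EM T) (x : hom X (alg_carrier A)) :
  alg_str (Free X) ;; (fmap T x ;; alg_str A) = fmap T (fmap T x ;; alg_str A) ;; alg_str A.
Proof.
  simpl. rewrite fmap_cmp, !cmp_assoc, (alg_mult A), <- cmp_assoc, <- mu_nat, cmp_assoc.
  reflexivity.
Qed.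

Definition free_ext {X : C} {A : EM T} (x : hom X (alg_carrier A)) : Free X ~> A :=
  @alg_hom (Free X) A (fmap T x ;; alg_str A) (free_ext_alg X A x).

Lemma eta_free_ext {X : C} {A : EM T} (x : hom X (alg_carrier A)) :
  eta T X ;; U (free_ext x) = x.
Proof.
  simpl. rewrite <- cmp_assoc, <- eta_nat, cmp_assoc, (alg_unit A), cmp_idr. reflexivity.
Qed.

Lemma free_hom_ext {X : C} {A : EM T} (h : Free X ~> A) : h = free_ext (eta T X ;; U h).
Proof.
  apply U_inj. simpl. rewrite fmap_cmp, cmp_assoc.
  pose proof (U_alg h) as E; simpl in E; rewrite <- E.
  rewrite <- cmp_assoc, mu_eta_r, cmp_idl. reflexivity.
Qed.

Lemma free_ext_cmp {X : C} {A B : EM T} (x : hom X (alg_carrier A)) (h : A ~> B) :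
  free_ext x ;; h = free_ext (x ;; U h).
Proof.
  apply U_inj. simpl. rewrite cmp_assoc, (proj2_sig h), fmap_cmp, !cmp_assoc. reflexivity.
Qed.

Lemma mono_U {A B : EM T} (m : A ~> B) : is_mono m -> is_mono (U m).
Proof.
  intros Hm W x y E.
  assert (H : free_ext x ;; m = free_ext y ;; m) by (rewrite !free_ext_cmp, E; reflexivity).
  apply Hm in H. rewrite <- (eta_free_ext x), <- (eta_free_ext y), H. reflexivity.
Qed.

Lemma U_mono {A B : EM T} (m : A ~> B) : is_mono (U m) -> is_mono m.
Proof. intros Hm W x y E. apply U_inj, Hm. rewrite <- !U_cmp, E. reflexivity. Qed.

Lemma iso_U {A B : EM T} (m : A ~> B) : is_iso m -> is_iso (U m).
Proof. intros [n [H1 H2]]. exists (U n). rewrite <- !U_cmp, H1, H2. split; reflexivity. Qed.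

Lemma pullback_U {X Y Z P : EM T} (f : X ~> Z) (g : Y ~> Z) (p1 : P ~> X) (p2 : P ~> Y) :
  is_pullback f g p1 p2 -> is_pullback (U f) (U g) (U p1) (U p2).
Proof.
  intros [Hsq Huniv]. split; [rewrite <- !U_cmp, Hsq; reflexivity|].
  intros Q q1 q2 Hq.
  destruct (Huniv (Free Q) (free_ext q1) (free_ext q2)) as [u [[Hu1 Hu2] Hu']].
  { rewrite !free_ext_cmp, Hq. reflexivity. }
  exists (eta T Q ;; U u). split.
  - rewrite !cmp_assoc. split.
    + change (U u ;; U p1) with (U (u ;; p1)). rewrite Hu1. apply eta_free_ext.
    + change (U u ;; U p2) with (U (u ;; p2)). rewrite Hu2. apply eta_free_ext.
  - intros t [Ht1 Ht2].
    assert (E : u = free_ext t) by (apply Hu'; rewrite !free_ext_cmp, Ht1, Ht2; split; reflexivity).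
    rewrite E. apply eta_free_ext.
Qed.

Lemma EM_complete : is_complete C -> is_complete (EM T).
Proof.
  intros HC J F.
  set (G := Functor_comp_def J (EM T) C F Forget).
  destruct (HC J G) as (L & pi & HL). pose proof HL as [Hcone Huniv].
  destruct (Huniv (T L) (fun j => fmap T (pi j) ;; alg_str (F j) : hom (T L) (G j)))
    as [l [Hl _]].
  { intros j k a. simpl. rewrite cmp_assoc, (U_alg (fmap F a)), <- cmp_assoc, <- fmap_cmp.
    f_equal. f_equal. apply (Hcone j k a). }
  assert (Hunit : eta T L ;; l = idm L).
  { apply (limit_jointly_mono G L pi _ _ HL). intros j.
    rewrite cmp_assoc, Hl, <- cmp_assoc, <- eta_nat, cmp_assoc. simpl.
    rewrite (alg_unit (F j)), cmp_idl, cmp_idr. reflexivity. }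
  assert (Hmult : fmap T l ;; l = mu T L ;; l).
  { apply (limit_jointly_mono G L pi _ _ HL). intros j.
    rewrite !cmp_assoc, !Hl, <- !cmp_assoc, <- fmap_cmp, Hl, fmap_cmp, cmp_assoc. simpl.
    rewrite (alg_mult (F j)), <- cmp_assoc, mu_nat. reflexivity. }
  set (LA := {| alg_carrier := L; alg_str := l; alg_unit := Hunit; alg_mult := Hmult |} : EM T).
  exists LA, (fun j => @alg_hom LA (F j) (pi j) (Hl j)). split.
  - intros j k a. apply U_inj. apply (Hcone j k a).
  - intros L' pi' Hpi'.
    destruct (Huniv L' (fun j => U (pi' j))) as [u [Hu1 Hu2]].
    { intros j k a. rewrite <- (Hpi' j k a). reflexivity. }
    assert (Hua : alg_str L' ;; u = fmap T u ;; l).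
    { apply (limit_jointly_mono G L pi _ _ HL). intros j.
      rewrite !cmp_assoc, Hu1, Hl, <- cmp_assoc, <- fmap_cmp, Hu1. apply U_alg. }
    exists (@alg_hom L' LA u Hua). split.
    + intros j. apply U_inj. apply Hu1.
    + intros v Hv. apply U_inj. apply Hu2. intros j. rewrite <- (Hv j). reflexivity.
Qed.

End EilenbergMoore.

Section PushoutLifting.
Context {C : Category} (T : Monad C).

Local Notation "A ~> B" := (@hom (EM T) A B) (at level 90).

Section Pushout.
Context {S X Y : EM T} (f : S ~> X) (g : S ~> Y)
  {Q : C} (i1 : hom (alg_carrier X) Q) (i2 : hom (alg_carrier Y) Q)
  (HP : is_pushout (U T f) (U T g) i1 i2)
  (HTP : is_pushout (fmap T (U T f)) (fmap T (U T g)) (fmap T i1) (fmap T i2))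
  (HTTP : is_pushout (fmap T (fmap T (U T f))) (fmap T (fmap T (U T g)))
                     (fmap T (fmap T i1)) (fmap T (fmap T i2))).

(** The structure map is induced on the pushout [T Q] of [T] applied to the span; its unit law
    is checked on the pushout [Q] and its associativity on the pushout [T (T Q)]. *)
Lemma pushout_alg_str :
  exists c : hom (T Q) Q,
    eta T Q ;; c = idm Q /\ fmap T c ;; c = mu T Q ;; c /\
    fmap T i1 ;; c = alg_str X ;; i1 /\ fmap T i2 ;; c = alg_str Y ;; i2.
Proof.
  pose proof HP as [Psq _]. pose proof HTP as [_ TPuniv].
  destruct (TPuniv Q (alg_str X ;; i1) (alg_str Y ;; i2)) as [c [[Hc1 Hc2] _]].
  { rewrite <- !cmp_assoc, <- (U_alg T f), <- (U_alg T g), !cmp_assoc, Psq. reflexivity. }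
  exists c. split; [|split; [|split; assumption]].
  - apply (pushout_jointly_epi _ _ _ _ _ _ HP).
    + rewrite cmp_idr, <- cmp_assoc, eta_nat, cmp_assoc, Hc1, <- cmp_assoc,
        (alg_unit X), cmp_idl. reflexivity.
    + rewrite cmp_idr, <- cmp_assoc, eta_nat, cmp_assoc, Hc2, <- cmp_assoc,
        (alg_unit Y), cmp_idl. reflexivity.
  - apply (pushout_jointly_epi _ _ _ _ _ _ HTTP).
    + rewrite <- !cmp_assoc, <- fmap_cmp, Hc1, fmap_cmp, cmp_assoc, Hc1.
      rewrite mu_nat, cmp_assoc, Hc1, <- !cmp_assoc, (alg_mult X). reflexivity.
    + rewrite <- !cmp_assoc, <- fmap_cmp, Hc2, fmap_cmp, cmp_assoc, Hc2.
      rewrite mu_nat, cmp_assoc, Hc2, <- !cmp_assoc, (alg_mult Y). reflexivity.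
Qed.

Lemma pushout_lift :
  exists (QA : EM T) (j1 : X ~> QA) (j2 : Y ~> QA),
    is_pushout f g j1 j2 /\ is_pushout (U T f) (U T g) (U T j1) (U T j2).
Proof.
  destruct pushout_alg_str as (c & Hunit & Hmult & Hc1 & Hc2).
  pose proof HP as [Psq Puniv].
  set (QA := {| alg_carrier := Q; alg_str := c; alg_unit := Hunit; alg_mult := Hmult |}
          : EM T).
  exists QA, (@alg_hom _ T X QA i1 (eq_sym Hc1)), (@alg_hom _ T Y QA i2 (eq_sym Hc2)).
  split; [|exact HP]. split; [apply U_inj; exact Psq|].
  intros W w1 w2 Hw.
  destruct (Puniv W (U T w1) (U T w2)) as [u [[Hu1 Hu2] Hu']].
  { rewrite <- !U_cmp, Hw. reflexivity. }
  assert (Hu : c ;; u = fmap T u ;; alg_str W).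
  { apply (pushout_jointly_epi _ _ _ _ _ _ HTP).
    - rewrite <- !cmp_assoc, Hc1, <- fmap_cmp, Hu1, cmp_assoc, Hu1. apply U_alg.
    - rewrite <- !cmp_assoc, Hc2, <- fmap_cmp, Hu2, cmp_assoc, Hu2. apply U_alg. }
  exists (@alg_hom _ T QA W u Hu). split.
  - split; apply U_inj; assumption.
  - intros v [Hv1 Hv2]. apply U_inj, Hu'.
    split; [rewrite <- Hv1 | rewrite <- Hv2]; reflexivity.
Qed.

End Pushout.

Context (hpo : has_pushouts (C := C))
  (hT : preserves_pushouts_of_regular_epis (mT T))
  (hT2 : preserves_pushouts_of_regular_epis (monad_sq T)).

Lemma EM_pushout_of_regular_epis {S X Y : EM T} (f : S ~> X) (g : S ~> Y) :
  is_regular_epi (U T f) -> is_regular_epi (U T g) ->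
  exists (Q : EM T) (i1 : X ~> Q) (i2 : Y ~> Q),
    is_pushout f g i1 i2 /\ is_pushout (U T f) (U T g) (U T i1) (U T i2).
Proof.
  intros Hf Hg.
  destruct (hpo _ _ _ (U T f) (U T g)) as (Q & i1 & i2 & HP).
  exact (pushout_lift f g i1 i2 HP (hT _ _ _ _ _ _ _ _ Hf Hg HP)
           (hT2 _ _ _ _ _ _ _ _ Hf Hg HP)).
Qed.

Lemma pushout_U {S X Y Q : EM T} (f : S ~> X) (g : S ~> Y) (j1 : X ~> Q) (j2 : Y ~> Q) :
  is_regular_epi (U T f) -> is_regular_epi (U T g) -> is_pushout f g j1 j2 ->
  is_pushout (U T f) (U T g) (U T j1) (U T j2).
Proof.
  intros Hf Hg HJ.
  destruct (EM_pushout_of_regular_epis f g Hf Hg) as (Q0 & i1 & i2 & HI & HUI).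
  destruct (pushout_unique f g i1 i2 j1 j2 HI HJ) as (m & Hm & <- & <-).
  rewrite !U_cmp. exact (pushout_cmp_iso _ _ _ _ _ HUI (iso_U T m Hm)).
Qed.

(** A reflexive pair is a span of split epimorphisms, and its pushout, which lifts to algebras,
    has equal legs. *)
Lemma EM_reflexive_coequalizer {A B : EM T} (f g : A ~> B)
  (s : hom (alg_carrier B) (alg_carrier A)) :
  s ;; U T f = idm _ -> s ;; U T g = idm _ ->
  exists (Q : EM T) (q : B ~> Q), is_coequalizer f g q.
Proof.
  intros Hf Hg.
  destruct (EM_pushout_of_regular_epis f g) as (Q & i1 & i2 & HE & [Psq _]);
    try (apply split_epi_regular_epi; eexists; eassumption).
  assert (E : i1 = i2).
  { apply U_inj.
    rewrite <- (cmp_idl (U T i1)), <- Hf, cmp_assoc, Psq, <- cmp_assoc, Hg, cmp_idl.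
    reflexivity. }
  subst i2. exists Q, i1. exact (pushout_diag_coequalizer f g i1 HE).
Qed.

End PushoutLifting.

Section Colimits.
Context {C : Category} (T : Monad C) {J : SmallCategory} (F : Functor J (EM T)).

Local Notation "A ~> B" := (@hom (EM T) A B) (at level 90).
Local Notation G := (Functor_comp_def J (EM T) C F (Forget T)).
Local Notation TG := (Functor_comp_def J C C G (mT T)).

(** With [L = colim U F] and [M = colim T U F], the colimit of [F] is the coequaliser of the
    two algebra maps [T M ⇉ T L] induced by the structure maps [act : M -> L] and by
    [Tiota : M -> T L], the comparison of [colim T U F] with [T (colim U F)]. *)
Context (L : C) (iota : forall j, hom (alg_carrier (F j)) L) (HL : is_colimit G L iota)
  (M : C) (kappa : forall j, hom (T (alg_carrier (F j))) M) (HM : is_colimit TG M kappa)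
  (act : hom M L) (Hact : forall j, kappa j ;; act = alg_str (F j) ;; iota j)
  (Tiota : hom M (T L)) (HTiota : forall j, kappa j ;; Tiota = fmap T (iota j)).

Definition presentation_act : Free T M ~> Free T L := @free_ext _ T M (Free T L) (act ;; eta T L).
Definition presentation_Tiota : Free T M ~> Free T L := @free_ext _ T M (Free T L) Tiota.

Lemma presentation_reflexive :
  exists s : hom L M,
    fmap T s ;; U T presentation_act = idm _ /\ fmap T s ;; U T presentation_Tiota = idm _.
Proof.
  pose proof HL as [Lcocone Luniv]. pose proof HM as [Mcocone _].
  destruct (Luniv M (fun j => eta T _ ;; kappa j : hom (G j) M)) as [s [Hs _]].
  { intros j k a. simpl. rewrite <- cmp_assoc, eta_nat, cmp_assoc.
    f_equal. apply (Mcocone j k a). }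
  simpl in Hs.
  assert (Esa : s ;; act = idm L).
  { apply (colimit_jointly_epi G L iota _ _ HL). intros j. simpl.
    rewrite <- cmp_assoc, Hs, cmp_assoc, Hact, <- cmp_assoc. simpl.
    rewrite (alg_unit (F j)), cmp_idl, cmp_idr. reflexivity. }
  assert (EsT : s ;; Tiota = eta T L).
  { apply (colimit_jointly_epi G L iota _ _ HL). intros j. simpl.
    rewrite <- cmp_assoc, Hs, cmp_assoc, HTiota. simpl. rewrite eta_nat. reflexivity. }
  exists s. unfold presentation_act, presentation_Tiota; simpl. split.
  - rewrite <- cmp_assoc, <- fmap_cmp, <- cmp_assoc, Esa, cmp_idl. apply mu_eta_r.
  - rewrite <- cmp_assoc, <- fmap_cmp, EsT. apply mu_eta_r.
Qed.

Context (Q : EM T) (q : Free T L ~> Q)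
  (Hq : is_coequalizer presentation_act presentation_Tiota q).

Lemma presentation_cocone_alg (j : J) :
  alg_str (F j) ;; (iota j ;; eta T L ;; U T q)
  = fmap T (iota j ;; eta T L ;; U T q) ;; alg_str Q.
Proof.
  pose proof Hq as [Qsq _].
  assert (Hpres : act ;; eta T L ;; U T q = Tiota ;; U T q).
  { transitivity (eta T M ;; U T (presentation_act ;; q)).
    - rewrite U_cmp, <- cmp_assoc. unfold presentation_act. rewrite eta_free_ext. reflexivity.
    - rewrite Qsq, U_cmp, <- cmp_assoc. unfold presentation_Tiota. rewrite eta_free_ext.
      reflexivity. }
  transitivity (fmap T (iota j) ;; U T q).
  - transitivity (kappa j ;; (act ;; eta T L ;; U T q)).
    + rewrite <- !cmp_assoc, Hact. reflexivity.
    + rewrite Hpres, <- cmp_assoc, HTiota. reflexivity.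
  - rewrite (free_hom_ext T q) at 1. simpl.
    rewrite <- cmp_assoc, <- fmap_cmp, <- cmp_assoc. reflexivity.
Qed.

Lemma presentation_colimit :
  is_colimit F Q (fun j => @alg_hom _ T (F j) Q _ (presentation_cocone_alg j)).
Proof.
  pose proof HL as [Lcocone Luniv]. pose proof Hq as [_ Quniv]. split.
  - intros j k a. apply U_inj. simpl. rewrite <- !cmp_assoc.
    exact (f_equal (fun x => x ;; eta T L ;; U T q) (Lcocone j k a)).
  - intros W rho Hrho.
    destruct (Luniv W (fun j => U T (rho j))) as [v [Hv Hv']].
    { intros j k a. rewrite <- (Hrho j k a). reflexivity. }
    simpl in Hv.
    assert (Eact : act ;; v = Tiota ;; U T (free_ext T v)).
    { apply (colimit_jointly_epi TG M kappa _ _ HM). intros j. simpl.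
      rewrite <- !cmp_assoc, Hact, HTiota, !cmp_assoc, Hv. simpl.
      rewrite <- cmp_assoc, <- fmap_cmp, Hv. apply U_alg. }
    destruct (Quniv W (free_ext T v)) as [u [Hu Hu']].
    { unfold presentation_act, presentation_Tiota. rewrite !free_ext_cmp. f_equal.
      transitivity (act ;; v); [|exact Eact].
      rewrite cmp_assoc. f_equal. apply eta_free_ext. }
    exists u. split.
    + intros j. apply U_inj.
      transitivity (iota j ;; (eta T L ;; U T (q ;; u))).
      { simpl. rewrite !cmp_assoc. reflexivity. }
      rewrite Hu, eta_free_ext. apply Hv.
    + intros u' Hu2. apply Hu'.
      rewrite (free_hom_ext T (q ;; u')). f_equal.
      symmetry. apply Hv'. intros j. rewrite <- (Hu2 j). simpl. rewrite !cmp_assoc.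
      reflexivity.
Qed.

End Colimits.

Lemma EM_cocomplete {C : Category} (T : Monad C) :
  has_pushouts (C := C) ->
  preserves_pushouts_of_regular_epis (mT T) ->
  preserves_pushouts_of_regular_epis (monad_sq T) ->
  is_cocomplete C -> is_cocomplete (EM T).
Proof.
  intros hpo hT hT2 HC J F.
  set (G := Functor_comp_def J (EM T) C F (Forget T)).
  set (TG := Functor_comp_def J C C G (mT T)).
  destruct (HC J G) as (L & iota & HL). pose proof HL as [Lcocone _].
  destruct (HC J TG) as (M & kappa & HM). pose proof HM as [_ Muniv].
  destruct (Muniv L (fun j => alg_str (F j) ;; iota j : hom (TG j) L)) as [act [Hact _]].
  { intros j k a. simpl. rewrite <- cmp_assoc, <- (U_alg T (fmap F a)), cmp_assoc.
    f_equal. apply (Lcocone j k a). }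
  destruct (Muniv (T L) (fun j => fmap T (iota j) : hom (TG j) (T L))) as [Tiota [HTiota _]].
  { intros j k a. simpl. rewrite <- fmap_cmp. f_equal. apply (Lcocone j k a). }
  destruct (presentation_reflexive T F L iota HL M kappa HM act Hact Tiota HTiota)
    as (s & Hs1 & Hs2).
  destruct (EM_reflexive_coequalizer T hpo hT hT2 (presentation_act T L M act)
              (presentation_Tiota T L M Tiota) (fmap T s) Hs1 Hs2) as (Q & q & Hq).
  eexists; eexists.
  exact (presentation_colimit T F L iota HL M kappa HM act Hact Tiota HTiota Q q Hq).
Qed.

Section RegularEpis.
Context {C : Category} (T : Monad C)
  (hsplit : forall (X Y : C) (e : hom X Y), is_regular_epi e -> is_split_epi e).

Local Notation "A ~> B" := (@hom (EM T) A B) (at level 90).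

(** If [s] is a section of [U q], then [q] coequalises the algebra maps [Free A ⇉ A] extending
    [idm] and [U q ;; s]. *)
Lemma regular_epi_of_U {A B : EM T} (q : A ~> B) : is_regular_epi (U T q) -> is_regular_epi q.
Proof.
  intros Hq. pose proof (regular_epi_epi _ Hq) as Hq_epi.
  destruct (hsplit _ _ _ Hq) as [s Hs].
  exists (Free T A), (free_ext T (idm (alg_carrier A))), (free_ext T (U T q ;; s)). split.
  - rewrite !free_ext_cmp. f_equal. rewrite cmp_idl, cmp_assoc, Hs, cmp_idr. reflexivity.
  - intros W h Hh. rewrite !free_ext_cmp in Hh.
    assert (Eh : idm _ ;; U T h = U T q ;; s ;; U T h).
    { rewrite <- (eta_free_ext T (idm _ ;; U T h)), Hh, eta_free_ext. reflexivity. }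
    rewrite cmp_idl, cmp_assoc in Eh.
    assert (Hk : alg_str B ;; (s ;; U T h) = fmap T (s ;; U T h) ;; alg_str W).
    { apply (split_epi_epi _ (fmap_split_epi T _ (ex_intro _ s Hs))).
      rewrite <- cmp_assoc, <- (U_alg T q), cmp_assoc, <- Eh.
      rewrite <- cmp_assoc, <- fmap_cmp, <- Eh. apply U_alg. }
    exists (alg_hom T _ Hk). split.
    + apply U_inj. symmetry. exact Eh.
    + intros v Hv. apply U_inj, Hq_epi. simpl. rewrite <- Eh, <- Hv. reflexivity.
Qed.

Context (hfs : is_factorisation_system (RegEpi C) (Mono C)).

(** The (regular epi, mono) factorisation [U h = e ;; m] lifts: the structure map of the image
    is the diagonal fill-in of the square [T e ;; (T m ;; alg_str B) = (alg_str A ;; e) ;; m],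
    where [T e] is a split, hence regular, epimorphism. *)
Lemma EM_factorisation {A B : EM T} (h : A ~> B) :
  exists (I : EM T) (e : A ~> I) (m : I ~> B),
    is_regular_epi (U T e) /\ is_mono (U T m) /\ h = e ;; m.
Proof.
  destruct hfs as (_ & _ & _ & _ & Hfact & Hdiag).
  destruct (Hfact _ _ (U T h)) as (I & e & m & He & Hm & Eh).
  destruct (Hdiag _ _ _ _ (fmap T e) m (alg_str A ;; e) (fmap T m ;; alg_str B))
    as [d [[Hd1 Hd2] _]].
  - apply split_epi_regular_epi, fmap_split_epi, hsplit, He.
  - exact Hm.
  - rewrite <- cmp_assoc, <- fmap_cmp, <- Eh, <- (U_alg T h), Eh, cmp_assoc. reflexivity.
  - assert (Hunit : eta T I ;; d = idm I).
    { apply Hm. rewrite cmp_assoc, Hd2, <- cmp_assoc, <- eta_nat, cmp_assoc, (alg_unit B),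
        cmp_idl, cmp_idr. reflexivity. }
    assert (Hmult : fmap T d ;; d = mu T I ;; d).
    { apply Hm. rewrite !cmp_assoc, !Hd2, <- cmp_assoc, <- fmap_cmp, Hd2, fmap_cmp, cmp_assoc,
        (alg_mult B), <- cmp_assoc, mu_nat, cmp_assoc. reflexivity. }
    set (IA := {| alg_carrier := I; alg_str := d; alg_unit := Hunit; alg_mult := Hmult |}
            : EM T).
    exists IA, (@alg_hom _ T A IA e (eq_sym Hd1)), (@alg_hom _ T IA B m Hd2).
    split; [exact He|]. split; [exact Hm|]. apply U_inj. exact Eh.
Qed.

(** Factor [q = e ;; m] as above; since [q] is a coequaliser and [m] is monic, [q] factors
    through [e], which makes [m] invertible. *)
Lemma regular_epi_U {A B : EM T} (q : A ~> B) : is_regular_epi q -> is_regular_epi (U T q).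
Proof.
  intros (Z & f & g & [Hsq Huniv]).
  destruct (EM_factorisation q) as (I & e & m & He & Hm & Eq).
  assert (Hfe : f ;; e = g ;; e).
  { apply U_inj, Hm. rewrite <- !U_cmp, !cmp_assoc, <- Eq, Hsq. reflexivity. }
  destruct (Huniv I e Hfe) as [u [Hu _]].
  assert (Eum : u ;; m = idm B).
  { destruct (Huniv B q Hsq) as [x [_ Hx]].
    transitivity x; [symmetry|]; apply Hx.
    - rewrite <- cmp_assoc, Hu. symmetry. exact Eq.
    - apply cmp_idr. }
  rewrite Eq, U_cmp. apply regular_epi_cmp_iso; [exact He|].
  exists (U T u). split.
  - apply Hm. rewrite cmp_assoc, <- U_cmp, Eum, U_id, cmp_idl, cmp_idr. reflexivity.
  - rewrite <- U_cmp, Eum. reflexivity.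
Qed.

Lemma EM_diagonal_fill {A B X Y : EM T} (e : A ~> B) (m : X ~> Y) (u : A ~> X) (v : B ~> Y) :
  is_regular_epi e -> is_mono m -> e ;; v = u ;; m ->
  exists! d : B ~> X, e ;; d = u /\ d ;; m = v.
Proof.
  intros He Hm Hsq.
  destruct hfs as (_ & _ & _ & _ & _ & Hdiag).
  pose proof (mono_U T m Hm) as HUm.
  destruct (Hdiag _ _ _ _ (U T e) (U T m) (U T u) (U T v) (regular_epi_U e He) HUm)
    as [d [[Hd1 Hd2] Hd']].
  { rewrite <- !U_cmp, Hsq. reflexivity. }
  assert (Hd : alg_str B ;; d = fmap T d ;; alg_str X).
  { apply HUm. rewrite cmp_assoc, Hd2, (U_alg T v), cmp_assoc, (U_alg T m).
    rewrite <- cmp_assoc, <- fmap_cmp, Hd2. reflexivity. }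
  exists (alg_hom T d Hd). split.
  - split; apply U_inj; assumption.
  - intros d' [E1 E2]. apply U_inj. change (d = U T d'). apply Hd'.
    split; [rewrite <- E1 | rewrite <- E2]; reflexivity.
Qed.

Lemma EM_factorisation_system : is_factorisation_system (RegEpi (EM T)) (Mono (EM T)).
Proof.
  destruct hfs as (Hiso & _ & Hcmp & _ & _ & _).
  split; [|split; [|split; [|split; [|split]]]].
  - intros X Y f Hf. apply regular_epi_of_U, Hiso, iso_U, Hf.
  - intros X Y f Hf. apply iso_mono, Hf.
  - intros X Y Z f g Hf Hg.
    apply regular_epi_of_U, (Hcmp _ _ _ (U T f) (U T g)); apply regular_epi_U; assumption.
  - intros X Y Z f g. apply mono_cmp.
  - intros X Y h. destruct (EM_factorisation h) as (I & e & m & He & Hm & Eh).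
    exists I, e, m. split; [apply regular_epi_of_U, He|]. split; [apply U_mono, Hm | exact Eh].
  - intros A B X Y. apply EM_diagonal_fill.
Qed.

End RegularEpis.

Section Transfer.
Context {C : Category} (T : Monad C)
  (hsplit : forall (X Y : C) (e : hom X Y), is_regular_epi e -> is_split_epi e)
  (hfs : is_factorisation_system (RegEpi C) (Mono C)).

Lemma EM_regular_epi_pullback_stable :
  pullback_stable (RegEpi C) -> pullback_stable (RegEpi (EM T)).
Proof.
  intros Hstab X Y Z P f g p1 p2 HP Hg.
  apply (regular_epi_of_U T hsplit).
  exact (Hstab _ _ _ _ _ _ _ _ (pullback_U T _ _ _ _ HP) (regular_epi_U T hsplit hfs _ Hg)).
Qed.

Context (hpo : has_pushouts (C := C))
  (hT : preserves_pushouts_of_regular_epis (mT T))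
  (hT2 : preserves_pushouts_of_regular_epis (monad_sq T)).

(** A kernel pair is a reflexive pair, split by the diagonal. *)
Lemma EM_regular_category :
  is_complete C -> pullback_stable (RegEpi C) -> is_regular_category (EM T).
Proof.
  intros HC Hstab. split; [|split].
  - intros J F _. apply (EM_complete T HC).
  - intros X Y P f p1 p2 [_ Huniv].
    destruct (Huniv X (idm X) (idm X) eq_refl) as [d [[Hd1 Hd2] _]].
    apply (EM_reflexive_coequalizer T hpo hT hT2 p1 p2 (U T d));
      rewrite <- U_cmp; [rewrite Hd1 | rewrite Hd2]; reflexivity.
  - exact (EM_regular_epi_pullback_stable Hstab).
Qed.

(** The pushout and pullback of a span of regular epimorphisms of [EM T] are computed in [C]. *)
Lemma EM_cond_iii : cond_iii (RegEpi C) -> cond_iii (RegEpi (EM T)).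
Proof.
  intros (A & _ & HEA & _ & HA).
  pose proof (EM_factorisation_system T hsplit hfs) as (Hiso & _ & Hcmp & _).
  exists (RegEpi (EM T)). split; [split|split; [|split]].
  - intros X. apply Hiso. exists (idm X). rewrite cmp_idl. split; reflexivity.
  - exact Hcmp.
  - intros X Y e He. exact He.
  - exact regular_epi_pushout_stable.
  - intros S X Y Q P f g i1 i2 p1 p2 u Hf Hg HP HB E1 E2.
    apply (regular_epi_of_U T hsplit).
    pose proof (regular_epi_U T hsplit hfs f Hf) as HUf.
    pose proof (regular_epi_U T hsplit hfs g Hg) as HUg.
    apply (HA _ _ _ _ _ (U T f) (U T g) (U T i1) (U T i2) (U T p1) (U T p2) (U T u)).
    + apply HEA, HUf.
    + apply HEA, HUg.
    + exact (pushout_U T hpo hT hT2 f g i1 i2 HUf HUg HP).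
    + exact (pullback_U T _ _ _ _ HB).
    + rewrite <- U_cmp, E1. reflexivity.
    + rewrite <- U_cmp, E2. reflexivity.
Qed.

End Transfer.

Lemma EM_cond_ii {C : Category} (T : Monad C) :
  (forall (X Y : C) (e : hom X Y), is_regular_epi e -> is_split_epi e) ->
  cond_ii (RegEpi C) (Mono C) -> cond_ii (RegEpi (EM T)) (Mono (EM T)).
Proof.
  intros hsplit (hfs & Hstab & _). split; [|split].
  - exact (EM_factorisation_system T hsplit hfs).
  - exact (EM_regular_epi_pullback_stable T hsplit hfs Hstab).
  - intros X Y e He. exact (regular_epi_epi e He).
Qed.

Theorem proposition3p13 :
  forall (C : Category),
    is_complete C -> is_cocomplete C -> is_regular_category C ->
    (forall (X Y : C) (e : hom X Y), is_regular_epi e -> is_split_epi e) ->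
    cond_i C -> cond_ii (RegEpi C) (Mono C) -> cond_iii (RegEpi C) ->
    forall T : Monad C,
      preserves_pushouts_of_regular_epis (mT T) ->
      preserves_pushouts_of_regular_epis (monad_sq T) ->
      is_complete (EM T) /\ is_cocomplete (EM T) /\ is_regular_category (EM T) /\
      cond_i (EM T) /\ cond_ii (RegEpi (EM T)) (Mono (EM T)) /\ cond_iii (RegEpi (EM T)).
Proof.
  intros C HC HCc _ hsplit [hpo _] Hii Hiii T hT hT2.
  pose proof Hii as (hfs & Hstab & _).
  pose proof (EM_complete T HC) as HEC.
  pose proof (EM_cocomplete T hpo hT hT2 HCc) as HECc.
  split; [exact HEC|]. split; [exact HECc|].
  split; [exact (EM_regular_category T hsplit hfs hpo hT hT2 HC Hstab)|].
  split; [exact (cond_i_of_complete_cocomplete HEC HECc)|].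
  split; [exact (EM_cond_ii T hsplit Hii)|].
  exact (EM_cond_iii T hsplit hfs hpo hT hT2 Hiii).
Qed.
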